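(* For all integers $r \geq 3$ and $k \geq \max\{r-1,4\}$, we have $N(k,r) \geq (2r-4)k$.
   Context: A $k$-power is a word of the form $u^k$ (concatenation of $k$ copies of $u$) with $u$ nonempty. An $r$-antipower is a word $u_1 \cdots u_r$ with $|u_1| = \cdots = |u_r|$ and $u_1,\dots,u_r$ pairwise distinct. $N(k,r)$ is the smallest integer $\ell$ such that every binary word (over $\{0,1\}$) of length $\ell$ contains either a $k$-power or an $r$-antipower as a factor (contiguous subword). *)

From mathcomp Require Import all_boot.
Set Implicit Arguments. Unset Strict Implicit. Unset Printing Implicit Defensive.

(* Binary words are sequences of booleans (false = 0, true = 1). *)

Definition factor (w v : seq bool) : bool := infix w v.

Definition is_kpower (k : nat) (w : seq bool) : Prop :=
  exists u : seq bool, u != [::] /\ w = flatten (nseq k u).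

Definition is_antipower (r : nat) (w : seq bool) : Prop :=
  exists us : seq (seq bool),
    [/\ size us = r, w = flatten us,
        (forall u, u \in us -> size u = size (head [::] us)) & uniq us].

(* Every binary word of length l contains a k-power or an r-antipower
   as a factor. N(k,r) is the least l with this property. *)
Definition forces (k r l : nat) : Prop :=
  forall w : seq bool, size w = l ->
    exists v, factor v w /\ (is_kpower k v \/ is_antipower r v).

Definition N_ge (k r m : nat) : Prop := forall l, forces k r l -> m <= l.

From mathcomp Require Import all_boot zify.
Set Implicit Arguments. Unset Strict Implicit. Unset Printing Implicit Defensive.

(* The witness is the infinite word ((01)^(k-1) 00)^ω, cut to length l < (2r-4)k.
   A factor 00 of it starts exactly at the positions congruent to -2 or -1 mod 2k,
   and between two such positions the word alternates.  In a k-power u^k inside the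
   prefix, |u| <= 2k-3, and some occurrence of 00 recurs at distance |u| and 2|u|,
   which the residues mod 2k forbid.  In an r-antipower u_1 ... u_r, the blocks
   without 00 alternate, so they are determined by their first letter and there
   are at most two of them; each other block contains a positive multiple of 2k
   smaller than the length of the prefix, and there are at most r-3 of those. *)

Section UniformBlocks.

Variables (T : eqType) (f : nat -> T).

Lemma take_drop_map_iota s n i m :
  take m (drop i (map f (iota s n))) = map f (iota (s + i) (minn m (n - i))).
Proof. by rewrite -map_drop -map_take drop_iota take_iota. Qed.

Lemma infix_map_iota v l : infix v (map f (iota 0 l)) ->
  exists2 s, s + size v <= l & v = map f (iota s (size v)).
Proof.
case/infixP=> [p [q E]].
have size_l : size p + size v + size q = l.
  by rewrite -(size_iota 0 l) -(size_map f) E !size_cat addnA.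
exists (size p); first lia.
have v_slice : v = take (size v) (drop (size p) (map f (iota 0 l))).
  by rewrite E drop_size_cat // take_size_cat.
rewrite [LHS]v_slice take_drop_map_iota; congr (map f (iota _ _)); lia.
Qed.

Lemma shape_uniform (us : seq (seq T)) m :
  {in us, forall u, size u = m} -> shape us = nseq (size us) m.
Proof.
move=> size_us; rewrite -(size_map size us); apply/all_pred1P/allP.
by move=> _ /mapP [u /size_us size_u ->]; rewrite /= size_u.
Qed.

Lemma size_flatten_uniform (us : seq (seq T)) m :
  {in us, forall u, size u = m} -> size (flatten us) = size us * m.
Proof.
by move=> /shape_uniform shape_us; rewrite size_flatten shape_us sumn_nseq mulnC.
Qed.

Lemma nth_uniform_flatten (us : seq (seq T)) m s i :
  {in us, forall u, size u = m} -> flatten us = map f (iota s (size us * m)) ->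
  i < size us -> nth [::] us i = map f (iota (s + i * m) m).
Proof.
move=> /shape_uniform shape_us flat_us lt_i.
rewrite -[us in LHS]flattenK nth_reshape shape_us nth_nseq lt_i take_nseq ?(ltnW lt_i) //.
rewrite sumn_nseq flat_us take_drop_map_iota; congr (map f (iota _ _)); nia.
Qed.

Lemma nth_map_iota_power x0 (u : seq T) k s p :
  flatten (nseq k u) = map f (iota s (k * size u)) -> p < k * size u ->
  f (s + p) = nth x0 u (p %% size u).
Proof.
move=> pow_u lt_p; have m_gt0 : 0 < size u by case: (size u) lt_p => [|//]; rewrite muln0.
have blk : u = map f (iota (s + p %/ size u * size u) (size u)).
  have := @nth_uniform_flatten (nseq k u) (size u) s (p %/ size u).
  rewrite size_nseq nth_nseq ltn_divLR // lt_p; apply=> //.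
  by move=> _ /nseqP [-> _].
rewrite {1}blk (nth_map 0) ?size_iota ?ltn_pmod // nth_iota ?ltn_pmod //.
by rewrite -addnA -divn_eq.
Qed.

End UniformBlocks.

Section ZigzagWord.

Variable k : nat.
Hypothesis k_gt0 : 0 < k.

(* Letter i of ((01)^(k-1) 00)^ω, read off the residue c of i mod 2k. *)
Definition zigzag (i : nat) : bool :=
  let c := i %% (2 * k) in odd c && (c.+1 < 2 * k).

Definition zeros_at (x : nat) : bool := ~~ zigzag x && ~~ zigzag x.+1.

Lemma zigzag_no11 x : ~~ (zigzag x && zigzag x.+1).
Proof. by rewrite /zigzag -[x.+1]addn1 modnD ?(modn_small (_ : 1 < 2 * k)); lia. Qed.

Lemma zigzag_succ x : ~~ zeros_at x -> zigzag x.+1 = ~~ zigzag x.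
Proof.
by have := zigzag_no11 x; rewrite /zeros_at; case: (zigzag x); case: (zigzag x.+1).
Qed.

Lemma zeros_atE x : zeros_at x = ((2 * k).-2 <= x %% (2 * k)).
Proof.
by rewrite /zeros_at /zigzag -[x.+1]addn1 modnD ?(modn_small (_ : 1 < 2 * k)); lia.
Qed.

Lemma zeros_at_window s : exists2 x, s <= x <= s + (2 * k).-2 & zeros_at x.
Proof.
exists (s + ((2 * k).-2 - s %% (2 * k))); first lia.
have lt_d : (2 * k).-2 - s %% (2 * k) < 2 * k by lia.
by rewrite zeros_atE modnD ?(modn_small lt_d); lia.
Qed.

Lemma zeros_at_ltn_mult x : zeros_at x -> x < x.+2 %/ (2 * k) * (2 * k).
Proof.
have d_gt0 : 0 < 2 * k by lia.
rewrite zeros_atE => zx; apply: leq_trans (ltn_ceil x d_gt0) _.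
rewrite leq_mul2r leq_divRL // [(x %/ _).+1 * _]mulSnr {2}(divn_eq x (2 * k)).
lia.
Qed.

Lemma zeros_at_progression x m : 0 < m -> m + 3 <= 2 * k ->
  zeros_at x -> zeros_at (x + m) -> ~~ zeros_at (x + m + m).
Proof.
move=> m_gt0 mk; rewrite !zeros_atE !modnD ?modn_mod ?(modn_small (_ : m < 2 * k)).
all: lia.
Qed.

Lemma zigzag_block_eq a b n :
  ~~ has zeros_at (iota a n.-1) -> ~~ has zeros_at (iota b n.-1) ->
  zigzag a = zigzag b -> map zigzag (iota a n) = map zigzag (iota b n).
Proof.
elim: n a b => [//|[|n] IH] a b /=; first by move=> _ _ ->.
rewrite !negb_or => /andP [za ha] /andP [zb hb] ab.
by rewrite ab; congr (_ :: _); apply: IH => //; rewrite !zigzag_succ // ab.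
Qed.

Definition block_has00 (s m i : nat) : bool := has zeros_at (iota (s + i * m) m.-1).

Lemma block_has00_ltn_mult s m i : block_has00 s m i ->
  s + i * m < (s + i * m + m) %/ (2 * k) * (2 * k).
Proof.
case/hasP=> x; rewrite mem_iota => /andP [le_x lt_x] z_x.
apply: (leq_ltn_trans le_x); apply: (leq_trans (zeros_at_ltn_mult z_x)).
by rewrite leq_mul2r leq_div2r ?orbT //; lia.
Qed.

Lemma count_block_has00 s m r : s + r * m < (r - 2) * (2 * k) ->
  count (block_has00 s m) (iota 0 r) <= r - 3.
Proof.
move=> end_lt; pose h i := (s + i * m + m) %/ (2 * k).
have h_bounds i : block_has00 s m i -> s + i * m < h i * (2 * k) <= s + i * m + m.
  by move=> b_i; rewrite leq_divM andbT block_has00_ltn_mult.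
have block_end i j : i < j -> s + i * m + m <= s + j * m.
  by move=> lt_ij; rewrite -addnA leq_add2l -mulSnr leq_mul2r lt_ij orbT.
rewrite -size_filter -(size_map h) -[r - 3](size_iota 1).
apply: uniq_leq_size.
  apply: (sorted_uniq ltn_trans ltnn).
  apply: (@homo_sorted_in _ _ (block_has00 s m) h ltn ltn).
  - move=> i j b_i b_j /block_end.
    case/andP: (h_bounds i b_i) => _ hi_le; case/andP: (h_bounds j b_j) => hj_gt _.
    by move=> ij; rewrite /ltn /= -(ltn_pmul2r (_ : 0 < 2 * k)); lia.
  - by apply/allP => i; rewrite mem_filter => /andP [].
  - exact: sorted_filter ltn_trans _ _ (iota_ltn_sorted 0 r).
move=> y /mapP [i]; rewrite mem_filter mem_iota => /andP [b_i lt_i] ->.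
have := block_end i r lt_i; case/andP: (h_bounds i b_i) => hi_gt hi_le end_le.
have : h i * (2 * k) < (r - 2) * (2 * k) by lia.
rewrite ltn_pmul2r ?muln_gt0 // mem_iota => lt_h.
have : 0 < h i * (2 * k) by lia.
by rewrite muln_gt0 => /andP [h_gt0 _]; lia.
Qed.

Lemma count_predC_block_has00 s m (us : seq (seq bool)) : uniq us ->
  (forall i, i < size us -> nth [::] us i = map zigzag (iota (s + i * m) m)) ->
  count (predC (block_has00 s m)) (iota 0 (size us)) <= 2.
Proof.
move=> uniq_us blockE.
rewrite -size_filter -(size_map (fun i => zigzag (s + i * m))).
apply: (@uniq_leq_size _ _ [:: false; true]); last by case.
rewrite map_inj_in_uniq ?filter_uniq ?iota_uniq //.
move=> i j; rewrite !mem_filter !mem_iota /= => /andP [b_i lt_i] /andP [b_j lt_j] ij.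
apply/eqP; rewrite -(nth_uniq [::] _ _ uniq_us) //.
by rewrite !blockE //; apply/eqP/zigzag_block_eq.
Qed.

End ZigzagWord.

Lemma zigzag_no_kpower k s n : 4 <= k -> n < (2 * k - 2) * k ->
  ~ is_kpower k (map (zigzag k) (iota s n)).
Proof.
move=> k_ge4 n_lt [u [u_nil v_pow]]; have k_gt0 : 0 < k by lia.
set m := size u; have m_gt0 : 0 < m by rewrite lt0n size_eq0.
have n_eq : n = k * m.
  rewrite -(size_iota s n) -(size_map (zigzag k)) v_pow (size_flatten_uniform (m := m)).
    by rewrite size_nseq.
  by move=> _ /nseqP [-> _].
have m_small : m + 3 <= 2 * k by move: n_lt; rewrite n_eq mulnC ltn_mul2r; lia.
have periodic p : p < n -> zigzag k (s + p) = nth false u (p %% m).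
  by rewrite n_eq; apply: nth_map_iota_power; rewrite -n_eq v_pow.
have [p z_p lt_p] : exists2 p, zeros_at k (s + p) & p.+1 < n.
  have [m_le1|m_ge2] := leqP m 1.
    exists 0; last lia.
    have zz_s : zigzag k s = zigzag k s.+1.
      have m_eq1 : m = 1 by lia.
      by rewrite -[in LHS](addn0 s) -addn1 !periodic ?m_eq1 ?modn1 //; lia.
    by have := zigzag_no11 k_gt0 s; rewrite addn0 /zeros_at -zz_s; case: zigzag.
  have [x /andP [le_sx le_xs] z_x] := zeros_at_window k_gt0 s.
  have : 2 * k <= n by rewrite n_eq [k * m]mulnC leq_mul2r; lia.
  by exists (x - s); rewrite ?subnKC //; lia.
pose q := p %% m.
have zeros_shift j : j <= 2 -> zeros_at k (s + q + j * m).
  move=> le_j2; have lt_q : q < m := ltn_pmod p m_gt0.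
  have : j.+1 * m < n by rewrite n_eq ltn_mul2r; lia.
  move=> le_n; move: z_p; rewrite /zeros_at -!addnA -!addnS !periodic; try lia.
  rewrite addnC modnMDl modn_mod addnS -addSn addnC modnMDl.
  by rewrite -[q.+1]addn1 modnDml addn1.
have z0 := zeros_shift 0 isT; have z1 := zeros_shift 1 isT; have z2 := zeros_shift 2 isT.
rewrite mul0n addn0 in z0; rewrite mul1n in z1; rewrite mul2n -addnn addnA in z2.
by have := zeros_at_progression k_gt0 m_gt0 m_small z0 z1; rewrite z2.
Qed.

Lemma zigzag_no_antipower k r s n : 0 < k -> s + n < (r - 2) * (2 * k) ->
  ~ is_antipower r (map (zigzag k) (iota s n)).
Proof.
move=> k_gt0 end_lt [us [size_us v_flat size_blocks uniq_us]].
set m := size (head [::] us) in size_blocks.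
have n_eq : n = size us * m.
  rewrite -(size_iota s n) -(size_map (zigzag k)) v_flat.
  exact: size_flatten_uniform.
have blockE i : i < size us -> nth [::] us i = map (zigzag k) (iota (s + i * m) m).
  by apply: nth_uniform_flatten; rewrite // -v_flat n_eq.
have := count_predC (block_has00 k s m) (iota 0 (size us)).
have := count_predC_block_has00 k_gt0 uniq_us blockE.
have := count_block_has00 k_gt0 (s := s) (m := m) (r := size us).
rewrite size_iota -n_eq size_us; lia.
Qed.

Theorem corollary2 (k r : nat) :
  3 <= r -> maxn r.-1 4 <= k -> N_ge k r ((2 * r - 4) * k).
Proof.
move=> _; rewrite geq_max => /andP [r_le k_ge4] l forces_l.
rewrite leqNgt; apply/negP => l_lt.
have size_w : size (map (zigzag k) (iota 0 l)) = l by rewrite size_map size_iota.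
have [v [v_factor v_pow]] := forces_l _ size_w.
have [s sv_le v_eq] := infix_map_iota v_factor.
have l_eq : (2 * r - 4) * k = (r - 2) * (2 * k) by rewrite mulnA mulnBl mulnC; lia.
rewrite v_eq in v_pow; case: v_pow.
  apply: zigzag_no_kpower => //.
  have : (2 * r - 4) * k <= (2 * k - 2) * k by rewrite leq_mul2r; lia.
  lia.
by apply: zigzag_no_antipower; lia.
Qed.
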